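(* Let $P$ be an $r$-differential poset and let $j_{m-1}\lessdot j_m$ be a covering pair in $P$, with $j_m$ of rank $m$, such that each of $j_{m-1}$ and $j_m$ covers at most one element of $P$. Then for every integer $n\ge m$ there is a saturated chain $j_{m-1}\lessdot j_m\lessdot j_{m+1}\lessdot\cdots\lessdot j_{n-1}\lessdot j_n$ in $P$ in which every $j_\ell$ covers at most one element of $P$.
   Context: An $r$-differential poset ($r$ a positive integer) is a graded poset with a minimum element, finite intervals and finite rank sets, such that (D1) an element covering exactly $m$ elements is covered by exactly $m+r$ elements, and (D2) two distinct elements that both cover exactly $m$ common elements are both covered by exactly $m$ common elements. $x\lessdot y$ means $y$ covers $x$. *)

From Stdlib Require Import List Arith.
Import ListNotations.

Section Differential.
Context {P : Type} (le : P -> P -> Prop).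

Definition lt (x y : P) : Prop := le x y /\ x <> y.

(* x ⋖ y : y covers x *)
Definition covers (x y : P) : Prop :=
  lt x y /\ forall z, le x z -> le z y -> z = x \/ z = y.

Definition is_partial_order : Prop :=
  (forall x, le x x) /\
  (forall x y, le x y -> le y x -> x = y) /\
  (forall x y z, le x y -> le y z -> le x z).

Definition has_card (A : P -> Prop) (m : nat) : Prop :=
  exists s : list P, NoDup s /\ (forall x, In x s <-> A x) /\ length s = m.

Definition covers_at_most_one (y : P) : Prop :=
  forall a b, covers a y -> covers b y -> a = b.

Definition differential_poset (r : nat) (rk : P -> nat) : Prop :=
  0 < r /\
  is_partial_order /\
  (exists z0, (forall x, le z0 x) /\ rk z0 = 0) /\
  (forall x y, covers x y -> rk y = S (rk x)) /\
  (forall x y, exists s : list P, forall z, le x z -> le z y -> In z s) /\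
  (forall n, exists s : list P, forall z, rk z = n -> In z s) /\
  (forall x m, has_card (fun z => covers z x) m ->
               has_card (fun z => covers x z) (m + r)) /\
  (forall x y m, x <> y ->
     has_card (fun z => covers z x /\ covers z y) m ->
     has_card (fun z => covers x z /\ covers y z) m).
End Differential.

(* Every step of the chain is an instance of one lemma: if x ⋖ y and both
   cover at most one element, some upper cover z of y covers at most one
   element.  Otherwise each of the r+1 upper covers z of y covers some w ≠ y.
   Since x is the only element covered by y, (D2) applied to y and w forces
   x ⋖ w, and then y and w have exactly one common upper cover, so z ↦ w is
   injective.  This yields r+1 upper covers of x besides y, whereas by (D1)
   x has at most r+1 upper covers in all. *)

From Stdlib Require Import List Arith Lia Classical.
Import ListNotations.

Lemma length_le_of_injective_rel (A B : Type) (R : A -> B -> Prop) (L : list A) (M : list B) :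
  NoDup L ->
  (forall a, In a L -> exists b, In b M /\ R a b) ->
  (forall a a' b, In a L -> In a' L -> R a b -> R a' b -> a = a') ->
  length L <= length M.
Proof.
  revert M; induction L as [|a L IH]; intros M Hnd Htot Hinj; simpl; [lia|].
  inversion Hnd as [|? ? Ha HndL]; subst.
  destruct (Htot a (or_introl eq_refl)) as [b [Hb Rab]].
  destruct (in_split _ _ Hb) as [M1 [M2 ->]].
  assert (length L <= length (M1 ++ M2)); [|rewrite length_app in *; simpl; lia].
  apply IH; auto.
  - intros a' Ha'. destruct (Htot a' (or_intror Ha')) as [b' [Hb' Rab']].
    exists b'; split; auto.
    destruct (in_elt_inv _ _ _ _ Hb') as [->|]; auto.
    assert (a' = a) by (apply (Hinj a' a b); simpl; auto).
    subst; contradiction.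
  - intros; eapply Hinj; simpl; eauto.
Qed.

Section HasCard.
Variable T : Type.

Lemma has_card_one (A : T -> Prop) (a : T) :
  A a -> (forall b, A b -> b = a) -> has_card A 1.
Proof.
  intros Ha Huniq; exists [a]; split; [|split; [|reflexivity]].
  - constructor; [intros []|constructor].
  - intro b; simpl; split; [intros [<-|[]]; auto|].
    intro Hb; left; symmetry; auto.
Qed.

Lemma has_card_zero (A : T -> Prop) : (forall b, ~ A b) -> has_card A 0.
Proof.
  intro Hnone; exists []; split; [constructor|split; [|reflexivity]].
  intro b; simpl; split; [tauto|apply Hnone].
Qed.

Lemma has_card_one_unique (A : T -> Prop) (a b : T) :
  has_card A 1 -> A a -> A b -> a = b.
Proof.
  intros [[|c [|]] [_ [Hs Hlen]]] Ha Hb; simpl in Hlen; try discriminate.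
  apply Hs in Ha; apply Hs in Hb; simpl in Ha, Hb; intuition congruence.
Qed.

Lemma has_card_zero_empty (A : T -> Prop) (a : T) : has_card A 0 -> ~ A a.
Proof.
  intros [[|] [_ [Hs Hlen]]] Ha; simpl in Hlen; try discriminate.
  exact (proj2 (Hs a) Ha).
Qed.

End HasCard.

Section UpperCoverStep.
Variables (P : Type) (le : P -> P -> Prop) (r : nat) (rk : P -> nat).
Hypothesis HP : differential_poset le r rk.

Notation covers := (covers le).
Notation covers_at_most_one := (covers_at_most_one le).

Lemma dp_upper_covers_card (x : P) (m : nat) :
  has_card (fun z => covers z x) m -> has_card (fun z => covers x z) (m + r).
Proof. destruct HP as (_ & _ & _ & _ & _ & _ & HD1 & _); apply HD1. Qed.

Lemma dp_common_upper_covers_card (x y : P) (m : nat) : x <> y ->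
  has_card (fun z => covers z x /\ covers z y) m ->
  has_card (fun z => covers x z /\ covers y z) m.
Proof. destruct HP as (_ & _ & _ & _ & _ & _ & _ & HD2); apply HD2. Qed.

Lemma dp_rank_covers (x y : P) : covers x y -> rk y = S (rk x).
Proof. destruct HP as (_ & _ & _ & Hgr & _); apply Hgr. Qed.

Lemma upper_covers_bound (x : P) : covers_at_most_one x ->
  exists M, (forall u, In u M <-> covers x u) /\ length M <= S r.
Proof.
  intro Hx.
  destruct (classic (exists w, covers w x)) as [[w Hw]|Hnone].
  - assert (Hcard : has_card (fun z => covers z x) 1)
      by (apply (has_card_one _ _ w); auto; intros; apply Hx; auto).
    destruct (dp_upper_covers_card _ _ Hcard) as [M [_ [HM Hlen]]].
    exists M; split; [exact HM|lia].
  - assert (Hcard : has_card (fun z => covers z x) 0)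
      by (apply has_card_zero; intros w Hw; apply Hnone; eauto).
    destruct (dp_upper_covers_card _ _ Hcard) as [M [_ [HM Hlen]]].
    exists M; split; [exact HM|lia].
Qed.

Lemma shared_upper_cover_covers (x y w z : P) :
  covers x y -> covers_at_most_one y -> y <> w ->
  covers y z -> covers w z -> covers x w.
Proof.
  intros Hxy Hy Hyw Hyz Hwz.
  apply NNPP; intro Hxw.
  assert (Hcard : has_card (fun u => covers u y /\ covers u w) 0).
  { apply has_card_zero; intros u [Huy Huw].
    apply Hxw; rewrite <- (Hy u x Huy Hxy); exact Huw. }
  exact (has_card_zero_empty _ _ z (dp_common_upper_covers_card _ _ _ Hyw Hcard)
           (conj Hyz Hwz)).
Qed.

Lemma shared_upper_cover_unique (x y w z z' : P) :
  covers x y -> covers_at_most_one y -> y <> w -> covers x w ->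
  covers y z -> covers w z -> covers y z' -> covers w z' -> z = z'.
Proof.
  intros Hxy Hy Hyw Hxw Hyz Hwz Hyz' Hwz'.
  assert (Hcard : has_card (fun u => covers u y /\ covers u w) 1).
  { apply (has_card_one _ _ x); [auto|].
    intros u [Huy _]; exact (Hy u x Huy Hxy). }
  exact (has_card_one_unique _ _ _ _ (dp_common_upper_covers_card _ _ _ Hyw Hcard)
           (conj Hyz Hwz) (conj Hyz' Hwz')).
Qed.

Lemma other_lower_cover (y z : P) :
  ~ covers_at_most_one z -> exists w, covers w z /\ w <> y.
Proof.
  intro Hz; apply NNPP; intro Hnone; apply Hz; intros a b Ha Hb.
  assert (a = y) by (apply NNPP; intro; apply Hnone; eauto).
  assert (b = y) by (apply NNPP; intro; apply Hnone; eauto).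
  congruence.
Qed.

Lemma upper_cover_covers_at_most_one (x y : P) :
  covers x y -> covers_at_most_one x -> covers_at_most_one y ->
  exists z, covers y z /\ covers_at_most_one z.
Proof.
  intros Hxy Hx Hy.
  apply NNPP; intro Hnone.
  assert (Hcard : has_card (fun z => covers z y) 1)
    by (apply (has_card_one _ _ x); auto; intros; apply Hy; auto).
  destruct (dp_upper_covers_card _ _ Hcard) as [Ly [HndLy [HLy HlenLy]]].
  destruct (upper_covers_bound x Hx) as [Mx [HMx HlenMx]].
  destruct (in_split y Mx (proj2 (HMx y) Hxy)) as [M1 [M2 HMxE]].
  (* z ↦ a lower cover w ≠ y of z, which is an upper cover of x other than y *)
  assert (Hinj : length Ly <= length (M1 ++ M2)).
  { apply (length_le_of_injective_rel _ _
             (fun z w => covers y z /\ covers w z /\ y <> w /\ covers x w)); auto.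
    - intros z Hz; apply HLy in Hz.
      destruct (other_lower_cover y z) as [w [Hwz Hwy]]; [intro; apply Hnone; eauto|].
      assert (Hxw : covers x w)
        by exact (shared_upper_cover_covers x y w z Hxy Hy (not_eq_sym Hwy) Hz Hwz).
      exists w; split; [|auto].
      apply HMx in Hxw; rewrite HMxE in Hxw.
      destruct (in_elt_inv _ _ _ _ Hxw); [contradiction|assumption].
    - intros z z' w _ _ (Hyz & Hwz & Hyw & Hxw) (Hyz' & Hwz' & _).
      exact (shared_upper_cover_unique x y w z z' Hxy Hy Hyw Hxw Hyz Hwz Hyz' Hwz'). }
  rewrite HMxE, length_app in HlenMx; rewrite length_app in Hinj; simpl in *; lia.
Qed.

End UpperCoverStep.

Lemma chain_extension (A : Type) (R : A -> A -> Prop) (Q : A -> Prop)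
  (Hstep : forall x y, R x y -> Q x -> Q y -> exists z, R y z /\ Q z)
  (x0 x1 : A) (H01 : R x0 x1) (Hx0 : Q x0) (Hx1 : Q x1) :
  forall k, exists j : nat -> A,
    j 0 = x0 /\ j 1 = x1 /\
    (forall l, l <= k -> R (j l) (j (S l))) /\
    (forall l, l <= S k -> Q (j l)).
Proof.
  induction k as [|k [j (Hj0 & Hj1 & HR & HQ)]].
  - exists (fun l => match l with 0 => x0 | _ => x1 end).
    repeat split; auto.
    + intros [|l] Hl; [exact H01|lia].
    + intros [|l] _; auto.
  - destruct (Hstep (j k) (j (S k))) as [z [Hz HQz]]; auto.
    exists (fun l => if l =? S (S k) then z else j l).
    split; [|split; [|split]].
    + exact Hj0.
    + destruct k; exact Hj1.
    + intros l Hl.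
      destruct (Nat.eqb_spec l (S (S k))); [lia|].
      destruct (Nat.eqb_spec (S l) (S (S k))) as [Heq|]; [|apply HR; lia].
      injection Heq as ->; exact Hz.
    + intros l Hl.
      destruct (Nat.eqb_spec l (S (S k))); [exact HQz|apply HQ; lia].
Qed.

Theorem proposition6p11 (P : Type) (le : P -> P -> Prop) (r : nat) (rk : P -> nat)
  (HP : differential_poset le r rk)
  (m : nat) (jm1 jm : P)
  (Hcov : covers le jm1 jm) (Hrk : rk jm = m)
  (H1 : covers_at_most_one le jm1) (H2 : covers_at_most_one le jm) :
  forall n : nat, m <= n ->
  exists j : nat -> P,
    j (m - 1) = jm1 /\ j m = jm /\
    (forall l, m - 1 <= l -> l < n -> covers le (j l) (j (S l))) /\
    (forall l, m - 1 <= l -> l <= n -> covers_at_most_one le (j l)).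
Proof.
  intros n Hmn.
  assert (Hm : 1 <= m) by (rewrite <- Hrk, (dp_rank_covers _ _ _ _ HP _ _ Hcov); lia).
  destruct (chain_extension _ _ _ (upper_cover_covers_at_most_one _ _ _ _ HP)
              jm1 jm Hcov H1 H2 (n - m)) as [j (Hj0 & Hj1 & Hchain & Hone)].
  exists (fun l => j (l - (m - 1))).
  split; [|split; [|split]].
  - now replace (m - 1 - (m - 1)) with 0 by lia.
  - now replace (m - (m - 1)) with 1 by lia.
  - intros l Hl Hln.
    replace (S l - (m - 1)) with (S (l - (m - 1))) by lia.
    apply Hchain; lia.
  - intros l Hl Hln; apply Hone; lia.
Qed.
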